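(* Let $P,Q\in\mathbb P_d$ and $R=\gamma^{\mathrm{AI}}_{P^{-1}Q^{-1}}(t)$ for some $t\in[0,1]$. Then $\operatorname{F}_R(P,Q)=\operatorname{F}^{\mathrm M}(P,Q)$.
   Context: $\mathbb P_d$ is the set of $d\times d$ complex positive definite matrices; $A\#B:=A^{1/2}(A^{-1/2}BA^{-1/2})^{1/2}A^{1/2}$. The affine-invariant geodesic between $A,B\in\mathbb P_d$ is $\gamma^{\mathrm{AI}}_{AB}(t):=A^{1/2}(A^{-1/2}BA^{-1/2})^tA^{1/2}$, $t\in[0,1]$; thus $\gamma^{\mathrm{AI}}_{P^{-1}Q^{-1}}(t)=P^{-1/2}(P^{1/2}Q^{-1}P^{1/2})^tP^{-1/2}$. The generalized fidelity is $\operatorname{F}_R(P,Q):=\operatorname{Tr}\big[\sqrt{R^{1/2}PR^{1/2}}\,R^{-1}\sqrt{R^{1/2}QR^{1/2}}\big]$, and the Matsumoto fidelity is $\operatorname{F}^{\mathrm M}(P,Q):=\operatorname{Tr}[P\#Q]$. *)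

From HB Require Import structures.
From mathcomp Require Import all_boot all_order all_algebra.
From mathcomp Require Import complex.
From mathcomp Require Import reals exp.
Set Implicit Arguments. Unset Strict Implicit. Unset Printing Implicit Defensive.
Import Order.TTheory GRing.Theory Num.Theory.
Local Open Scope ring_scope.
Local Open Scope sesquilinear_scope.

Section Defs.
Variable R : realType.
Local Notation C := (R[i]).

Definition adjmx (m n : nat) (A : 'M[C]_(m, n)) : 'M[C]_(n, m) := A ^t*.

Definition posdefmx (d : nat) (P : 'M[C]_d) : Prop :=
  P \is hermsymmx /\
  forall v : 'rV[C]_d, v != 0 -> 0 < (v *m P *m v ^t*) 0 0.

(* Real power A^t of a (positive definite) matrix via the spectral theorem:
   A = U^{-1} diag(lambda) U with U unitary, A^t := U^{-1} diag(lambda^t) U. *)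
Definition mxpowR (d : nat) (A : 'M[C]_d) (t : R) : 'M[C]_d :=
  invmx (spectralmx A)
  *m diag_mx (map_mx (fun z : C => ((complex.Re z) `^ t)%:C%C) (spectral_diag A))
  *m spectralmx A.

Definition mxsqrt (d : nat) (A : 'M[C]_d) : 'M[C]_d :=
  invmx (spectralmx A)
  *m diag_mx (map_mx (fun z : C => (Num.sqrt (complex.Re z))%:C%C) (spectral_diag A))
  *m spectralmx A.

Definition mxisqrt (d : nat) (A : 'M[C]_d) : 'M[C]_d := invmx (mxsqrt A).

Definition mxgeomean (d : nat) (A B : 'M[C]_d) : 'M[C]_d :=
  mxsqrt A *m mxsqrt (mxisqrt A *m B *m mxisqrt A) *m mxsqrt A.

Definition geodesicAI (d : nat) (A B : 'M[C]_d) (t : R) : 'M[C]_d :=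
  mxsqrt A *m mxpowR (mxisqrt A *m B *m mxisqrt A) t *m mxsqrt A.

Definition genFidelity (d : nat) (Rm P Q : 'M[C]_d) : C :=
  \tr (mxsqrt (mxsqrt Rm *m P *m mxsqrt Rm) *m invmx Rm
       *m mxsqrt (mxsqrt Rm *m Q *m mxsqrt Rm)).

Definition matsumotoFidelity (d : nat) (P Q : 'M[C]_d) : C :=
  \tr (mxgeomean P Q).

End Defs.

(** Write [S := P^{1/2}] and [Y := S Q^{-1} S]. Then the geodesic point is
    [R = S^{-1} Y^t S^{-1}], and [S^{-1} Q S^{-1} = Y^{-1}] gives
    [P # Q = S Y^{-1/2} S]. The positive matrices [G := S Y^{-t/2} S] and
    [H := S Y^{-(1+t)/2} S] satisfy [G R G = P] and [H R H = Q], since all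
    functions of [Y] commute. Whenever [P = G R G] with [G > 0], the matrix
    [R^{1/2} P R^{1/2}] is the square of the positive matrix [R^{1/2} G R^{1/2}],
    so both square roots in [F_R(P,Q)] are explicit and the trace collapses to
    [Tr(H R G) = Tr(S Y^{-1/2} S)]. *)

Set Warnings "-notation-overridden,-ambiguous-paths".
From HB Require Import structures.
From mathcomp Require Import all_boot all_order all_algebra.
From mathcomp Require Import complex.
From mathcomp Require Import reals exp.
From mathcomp Require Import ring.
Set Implicit Arguments. Unset Strict Implicit. Unset Printing Implicit Defensive.
Import Order.TTheory GRing.Theory Num.Theory.
Local Open Scope ring_scope.
Local Open Scope sesquilinear_scope.

Lemma mulmx1_invmx (F : comUnitRingType) n (A B : 'M[F]_n) :
  A *m B = 1%:M -> invmx A = B.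
Proof.
move=> AB1; have [uA _] := mulmx1_unit AB1.
by rewrite -[RHS](mulKmx uA) AB1 mulmx1.
Qed.

Lemma map_diag_mx_intertwine (F : idomainType) m n (f : F -> F)
    (a : 'rV[F]_m) (b : 'rV[F]_n) (W : 'M[F]_(m, n)) :
  diag_mx a *m W = W *m diag_mx b ->
  diag_mx (map_mx f a) *m W = W *m diag_mx (map_mx f b).
Proof.
move=> /matrixP aWb; apply/matrixP=> i j; have := aWb i j.
rewrite !mul_diag_mx !mul_mx_diag !mxE.
have [->|nzW] := eqVneq (W i j) 0; first by rewrite !mulr0 !mul0r.
by rewrite ![W i j * _]mulrC => /(mulIf nzW) ->.
Qed.

Section SpectralCalculus.
Variables (C : numClosedFieldType) (n : nat).
Implicit Types (A V : 'M[C]_n) (a : 'rV[C]_n).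

Lemma trmxC_mulmx m p (A : 'M[C]_(m, n)) (B : 'M[C]_(n, p)) :
  (A *m B)^t* = B^t* *m A^t*.
Proof. by rewrite trmx_mul map_mxM. Qed.

Lemma unitarymx_trmxC_mul V : V \is unitarymx -> V^t* *m V = 1%:M.
Proof. by move=> uV; rewrite -[V^t*]mul1mx mulmxKtV. Qed.

(* [spectralmx] picks an arbitrary unitary diagonalisation; functions of a
   normal matrix computed from it agree with those computed from any other. *)
Lemma spectral_calculusE (f : C -> C) A V a : V \is unitarymx ->
  A = V^t* *m diag_mx a *m V ->
  invmx (spectralmx A) *m diag_mx (map_mx f (spectral_diag A)) *m spectralmx A
  = V^t* *m diag_mx (map_mx f a) *m V.
Proof.
move=> uV eA; have uU := spectral_unitarymx A.
have /orthomx_spectralP eAU : A \is normalmx.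
  by apply/orthomx_spectral_subproof; exists (V, a); rewrite //= invmx_unitary.
rewrite invmx_unitary // in eAU *.
set U := spectralmx A in uU eAU *; set e := spectral_diag A in eAU *.
have eUV : diag_mx e *m (U *m V^t*) = (U *m V^t*) *m diag_mx a.
  have := congr1 (fun X => U *m X *m V^t*) (etrans (esym eAU) eA).
  by rewrite /= !mulmxA (unitarymxP uU) mul1mx (mulmxtVK _ uV).
transitivity (U^t* *m (diag_mx (map_mx f e) *m (U *m V^t*)) *m V).
  by rewrite !mulmxA (mulmxKtV _ uV).
by rewrite (map_diag_mx_intertwine f eUV) !mulmxA unitarymx_trmxC_mul // mul1mx.
Qed.

End SpectralCalculus.

Section PosDef.
Variables (R : realType) (d : nat).
Local Notation C := (R[i]).
Local Notation M := ('M[C]_d).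
Implicit Types (A B G H S T V : M) (r s : 'I_d -> R).

(* For unitary [V], [hspecmx V r] is the Hermitian matrix whose eigenvectors
   are the rows of [V], with eigenvalues [r]. *)
Definition hspecmx V r : M := V^t* *m diag_mx (\row_i (r i)%:C%C) *m V.

Lemma hspecmxE V r (a : 'rV[C]_d) : (forall i, a 0 i = (r i)%:C%C) ->
  V^t* *m diag_mx a *m V = hspecmx V r.
Proof.
by move=> ar; have -> : a = \row_i (r i)%:C%C by apply/matrixP=> k i; rewrite ord1 mxE.
Qed.

Lemma eq_hspecmx V r s : r =1 s -> hspecmx V r = hspecmx V s.
Proof. by move=> rs; rewrite {1}/hspecmx; apply: hspecmxE => i; rewrite mxE rs. Qed.

Lemma trmxC_hspecmx V r : (hspecmx V r)^t* = hspecmx V r.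
Proof.
rewrite /hspecmx !trmxC_mulmx trmxCK mulmxA; congr (_ *m _ *m _).
rewrite tr_diag_mx map_diag_mx; congr diag_mx.
by apply/matrixP=> i j; rewrite !mxE; exact: conjc_real.
Qed.

Lemma hermsymmxE A : (A \is hermsymmx) = (A^t* == A).
Proof. by apply/is_hermitianmxP/eqP; rewrite expr0 scale1r => /esym. Qed.

Lemma posdefmx_trmxC A : posdefmx A -> A^t* = A.
Proof. by case=> /[!hermsymmxE] /eqP. Qed.

Lemma posdefmx1 : posdefmx (1%:M : M).
Proof.
split; first by rewrite hermsymmxE trmx1 map_mx1.
by move=> v nz_v; rewrite mulmx1 -dotmxE dnorm_gt0.
Qed.

Lemma posdefmx_congr A B : posdefmx A -> B \in unitmx ->
  posdefmx (B^t* *m A *m B).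
Proof.
move=> [hA pA] uB; split.
  by move: hA; rewrite !hermsymmxE !trmxC_mulmx trmxCK mulmxA => /eqP ->.
move=> v nz_v.
have -> : v *m (B^t* *m A *m B) *m v^t* = (v *m B^t*) *m A *m (v *m B^t*)^t*.
  by rewrite trmxC_mulmx trmxCK !mulmxA.
apply: pA; apply: contra nz_v => /eqP vB0.
have uBt : B^t* \in unitmx by rewrite map_unitmx unitmx_tr.
by rewrite -[v](mulmxK uBt) vB0 mul0mx.
Qed.

Section Unitary.
Variable V : M.
Hypothesis uV : V \is unitarymx.

Lemma hspecmxM r s : hspecmx V r *m hspecmx V s = hspecmx V (fun i => r i * s i).
Proof.
rewrite /hspecmx !mulmxA (mulmxtVK _ uV) -[_ *m diag_mx _ *m diag_mx _]mulmxA.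
by rewrite mulmx_diag; apply: hspecmxE => i; rewrite !mxE -rmorphM.
Qed.

Lemma hspecmx1 : hspecmx V (fun=> 1) = 1%:M.
Proof.
rewrite -(unitarymx_trmxC_mul uV) -[V^t*]mulmx1 -diag_const_mx.
by apply/esym/hspecmxE => i; rewrite mxE.
Qed.

Lemma hspecmx_mulV r : (forall i, r i != 0) ->
  hspecmx V r *m hspecmx V (fun i => (r i)^-1) = 1%:M.
Proof.
by move=> nz_r; rewrite hspecmxM -hspecmx1; apply: eq_hspecmx => i; rewrite mulfV.
Qed.

Lemma hspecmx_unit r : (forall i, r i != 0) -> hspecmx V r \in unitmx.
Proof. move=> nz_r; exact: (mulmx1_unit (hspecmx_mulV nz_r)).1. Qed.

Lemma hspecmxV r : (forall i, r i != 0) ->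
  invmx (hspecmx V r) = hspecmx V (fun i => (r i)^-1).
Proof. by move=> nz_r; apply: mulmx1_invmx; apply: hspecmx_mulV. Qed.

Lemma mxsqrt_hspecmx r : mxsqrt (hspecmx V r) = hspecmx V (fun i => Num.sqrt (r i)).
Proof.
rewrite /mxsqrt (spectral_calculusE _ uV erefl).
by apply: hspecmxE => i; rewrite !mxE.
Qed.

Lemma mxpowR_hspecmx r t : mxpowR (hspecmx V r) t = hspecmx V (fun i => r i `^ t).
Proof.
rewrite /mxpowR (spectral_calculusE _ uV erefl).
by apply: hspecmxE => i; rewrite !mxE.
Qed.

Lemma posdefmx_hspecmx r : (forall i, 0 < r i) -> posdefmx (hspecmx V r).
Proof.
move=> r_gt0; set T := hspecmx V (fun i => Num.sqrt (r i)).
have -> : hspecmx V r = T^t* *m 1%:M *m T.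
  rewrite mulmx1 trmxC_hspecmx hspecmxM; apply: eq_hspecmx => i.
  by rewrite -expr2 sqr_sqrtr // ltW.
apply: posdefmx_congr posdefmx1 (hspecmx_unit _) => i.
by rewrite gt_eqF ?sqrtr_gt0.
Qed.

End Unitary.

Lemma quad_delta_mx (D : 'rV[C]_d) i (e := delta_mx 0 i : 'rV[C]_d) :
  (e *m diag_mx D *m e^t*) 0 0 = D 0 i.
Proof.
rewrite mul_mx_diag !mxE (bigD1 i) //= big1 => [|j nj]; rewrite !mxE.
  by rewrite !eqxx /= conjC1 mul1r mulr1 addr0.
by rewrite (negbTE nj) /= !mul0r.
Qed.

Lemma posdefmx_spectral A : posdefmx A ->
  exists V r, [/\ V \is unitarymx, forall i, 0 < r i & A = hspecmx V r].
Proof.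
move=> [hA pA]; have uU := spectral_unitarymx A.
have /orthomx_spectralP := hermitian_normalmx hA.
rewrite invmx_unitary //; set U := spectralmx A in uU *; set e := spectral_diag A => eA.
have e_gt0 i : 0 < e 0 i.
  have nz_dU : (delta_mx 0 i : 'rV[C]_d) *m U != 0.
    apply/eqP => dU0; have := congr1 (fun X : 'rV[C]_d => X *m U^t*) dU0.
    rewrite /= mulmxtVK // mul0mx => /matrixP/(_ 0 i).
    by rewrite !mxE !eqxx /= => /eqP; rewrite oner_eq0.
  by have := pA _ nz_dU; rewrite eA trmxC_mulmx !mulmxA !mulmxtVK // quad_delta_mx.
exists U, (fun i => complex.Re (e 0 i)); split => //.
  by move=> i; case: (e 0 i) (e_gt0 i) => a b; rewrite ltcE /= => /andP[].
rewrite {1}eA; apply: hspecmxE => i.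
by case: (e 0 i) (e_gt0 i) => a b; rewrite ltcE /= => /andP[/eqP -> _].
Qed.

Lemma posdefmx_unit A : posdefmx A -> A \in unitmx.
Proof.
case/posdefmx_spectral=> V [r [uV r_gt0 ->]].
by apply: hspecmx_unit => // i; rewrite gt_eqF.
Qed.

Lemma posdefmx_sandwich A T : posdefmx A -> posdefmx T -> posdefmx (T *m A *m T).
Proof.
move=> pA pT; rewrite -{1}(posdefmx_trmxC pT).
exact: posdefmx_congr pA (posdefmx_unit pT).
Qed.

Lemma posdefmx_invmx A : posdefmx A -> posdefmx (invmx A).
Proof.
case/posdefmx_spectral=> V [r [uV r_gt0 ->]].
rewrite (hspecmxV uV) => [|i]; last by rewrite gt_eqF.
by apply: posdefmx_hspecmx => // i; rewrite invr_gt0.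
Qed.

Lemma posdefmx_mxsqrt A : posdefmx A -> posdefmx (mxsqrt A).
Proof.
case/posdefmx_spectral=> V [r [uV r_gt0 ->]].
by rewrite (mxsqrt_hspecmx uV); apply: posdefmx_hspecmx => // i; rewrite sqrtr_gt0.
Qed.

Lemma mxsqrt_mulmx_self A : posdefmx A -> mxsqrt A *m mxsqrt A = A.
Proof.
case/posdefmx_spectral=> V [r [uV r_gt0 ->]].
rewrite (mxsqrt_hspecmx uV) (hspecmxM uV); apply: eq_hspecmx => i.
by rewrite -expr2 sqr_sqrtr // ltW.
Qed.

Lemma mxsqrt_sqr A : posdefmx A -> mxsqrt (A *m A) = A.
Proof.
case/posdefmx_spectral=> V [r [uV r_gt0 ->]].
rewrite (hspecmxM uV) (mxsqrt_hspecmx uV); apply: eq_hspecmx => i.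
by rewrite -expr2 sqrtr_sqr ger0_norm // ltW.
Qed.

Lemma mxsqrt_invmx A : posdefmx A -> mxsqrt (invmx A) = invmx (mxsqrt A).
Proof.
case/posdefmx_spectral=> V [r [uV r_gt0 ->]].
have nz_r i : r i != 0 by rewrite gt_eqF.
have nz_sqrt_r i : Num.sqrt (r i) != 0 by rewrite gt_eqF ?sqrtr_gt0.
rewrite (hspecmxV uV nz_r) !(mxsqrt_hspecmx uV) (hspecmxV uV nz_sqrt_r).
by apply: eq_hspecmx => i; rewrite sqrtrV // ltW.
Qed.

Lemma mxsqrt_congr A G : posdefmx A -> posdefmx G ->
  mxsqrt (mxsqrt A *m (G *m A *m G) *m mxsqrt A) = mxsqrt A *m G *m mxsqrt A.
Proof.
move=> pA pG.
move: (mxsqrt A) (mxsqrt_mulmx_self pA) (posdefmx_mxsqrt pA) => T TT pT.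
rewrite -TT; have -> : T *m (G *m (T *m T) *m G) *m T = (T *m G *m T) *m (T *m G *m T).
  by rewrite !mulmxA.
exact: mxsqrt_sqr (posdefmx_sandwich pG pT).
Qed.

Lemma genFidelity_congr A G H P Q : posdefmx A -> posdefmx G -> posdefmx H ->
  G *m A *m G = P -> H *m A *m H = Q -> genFidelity A P Q = \tr (H *m A *m G).
Proof.
move=> pA pG pH <- <-; rewrite /genFidelity (mxsqrt_congr pA pG) (mxsqrt_congr pA pH).
move: (mxsqrt A) (mxsqrt_mulmx_self pA) (posdefmx_mxsqrt pA) => T TT /posdefmx_unit uT.
have -> : invmx A = invmx T *m invmx T.
  by apply: mulmx1_invmx; rewrite -TT !mulmxA (mulmxK uT) (mulmxV uT).
rewrite !mulmxA (mulmxK uT) (mulmxKV uT).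
by rewrite mxtrace_mulC !mulmxA TT mxtrace_mulC mulmxA.
Qed.

Lemma mulmx_congr3 S X Y Z : S \in unitmx ->
  (S *m X *m S) *m (invmx S *m Y *m invmx S) *m (S *m Z *m S) = S *m (X *m Y *m Z) *m S.
Proof. by move=> uS; rewrite !mulmxA (mulmxK uS) (mulmxKV uS). Qed.

(* Here [Y = hspecmx V y]; in the proof [a = y^{t/2}] and [b = y^{1/2}]. *)
Lemma genFidelity_hspecmx S V y t : posdefmx S -> V \is unitarymx ->
    (forall i, 0 < y i) ->
  genFidelity (invmx S *m hspecmx V (fun i => y i `^ t) *m invmx S)
    (S *m S) (S *m hspecmx V (fun i => (y i)^-1) *m S)
  = \tr (S *m hspecmx V (fun i => Num.sqrt (y i)^-1) *m S).
Proof.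
move=> pS uV y_gt0; have uS := posdefmx_unit pS.
have [a a_gt0 ya] : exists2 a : 'I_d -> R,
    forall i, 0 < a i & forall i, y i `^ t = a i ^+ 2.
  exists (fun i => Num.sqrt (y i `^ t)) => i.
    by rewrite sqrtr_gt0 powR_gt0.
  by rewrite sqr_sqrtr ?powR_ge0.
have [b b_gt0 yb] : exists2 b : 'I_d -> R, forall i, 0 < b i & forall i, y i = b i ^+ 2.
  by exists (fun i => Num.sqrt (y i)) => i; rewrite ?sqrtr_gt0 ?sqr_sqrtr ?ltW.
have nz_a i : a i != 0 by rewrite gt_eqF.
have nz_b i : b i != 0 by rewrite gt_eqF.
rewrite (genFidelity_congr (G := S *m hspecmx V (fun i => (a i)^-1) *m S)
                           (H := S *m hspecmx V (fun i => (a i * b i)^-1) *m S)).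
- rewrite (mulmx_congr3 _ _ _ uS) !(hspecmxM uV).
  rewrite (@eq_hspecmx V _ (fun i => Num.sqrt (y i)^-1)) => [//|i].
  by rewrite ya sqrtrV ?ltW // yb sqrtr_sqr gtr0_norm //; field; rewrite nz_a nz_b.
- apply: posdefmx_sandwich (posdefmx_hspecmx uV _) (posdefmx_invmx pS) => i.
  exact: powR_gt0.
- by apply: posdefmx_sandwich (posdefmx_hspecmx uV _) pS => i; rewrite invr_gt0.
- by apply: posdefmx_sandwich (posdefmx_hspecmx uV _) pS => i; rewrite invr_gt0 mulr_gt0.
- rewrite (mulmx_congr3 _ _ _ uS) !(hspecmxM uV) (@eq_hspecmx V _ (fun=> 1)).
    by rewrite (hspecmx1 uV) mulmx1.
  by move=> i; rewrite ya; field; rewrite nz_a.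
- rewrite (mulmx_congr3 _ _ _ uS) !(hspecmxM uV).
  rewrite (@eq_hspecmx V _ (fun i => (y i)^-1)) => [//|i].
  by rewrite ya yb; field; rewrite nz_a nz_b.
Qed.

End PosDef.

Theorem mainTheorem9 (R : realType) (d : nat) (P Q : 'M[R[i]]_d) (t : R) :
  posdefmx P -> posdefmx Q -> 0 <= t <= 1 ->
  genFidelity (geodesicAI (invmx P) (invmx Q) t) P Q = matsumotoFidelity P Q.
Proof.
move=> pP pQ _.
rewrite /geodesicAI /matsumotoFidelity /mxgeomean /mxisqrt (mxsqrt_invmx pP) invmxK.
move: (mxsqrt P) (mxsqrt_mulmx_self pP) (posdefmx_mxsqrt pP) => S <- pS.
have uS := posdefmx_unit pS.
have [V [y [uV y_gt0 eY]]] :=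
  posdefmx_spectral (posdefmx_sandwich (posdefmx_invmx pQ) pS).
have eQ : invmx S *m Q *m invmx S = hspecmx V (fun i => (y i)^-1).
  rewrite -(hspecmxV uV) => [|i]; last by rewrite gt_eqF.
  rewrite -eY; apply/esym/mulmx1_invmx.
  by rewrite !mulmxA (mulmxK uS) (mulmxKV (posdefmx_unit pQ)) mulmxV.
have {2}-> : Q = S *m (invmx S *m Q *m invmx S) *m S.
  by rewrite !mulmxA (mulmxV uS) mul1mx (mulmxKV uS).
rewrite eY (mxpowR_hspecmx uV) eQ (mxsqrt_hspecmx uV).
exact: genFidelity_hspecmx.
Qed.
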